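(* Let $\mathbf{F}$ be a field of characteristic $3$, let $\lambda=(\lambda_1,\lambda_2)$ be a partition with $m=\lambda_1-\lambda_2$, and let $u\in\mathbf{N}_0$ with $\lambda_2\ge 2\cdot3^u$. Let $m_u$ denote the $u$-th base-3 digit of $m$. Then in $S_\mathbf{F}(\lambda)$: \[b(3^u)^2=b(3^u)\Big[\tbinom{m_u+2}{1}+\psi_{m,u}\Big]+b(2\cdot3^u),\] \[b(2\cdot3^u)^2=b(2\cdot3^u)\Big[\tbinom{m_u+1}{2}+\tbinom{m_u+1}{1}\psi_{m,u}\Big],\] \[b(3^u)b(2\cdot3^u)=b(2\cdot3^u)\Big[2\tbinom{m_u}{1}-\psi_{m,u}\Big],\] where integer coefficients are read in $\mathbf{F}$.
   Context: $S_\mathbf{F}(\lambda)=\operatorname{End}_{\mathbf{F}S_r}(M^\lambda)$ is a commutative $\mathbf{F}$-algebra with basis $b(0)=\mathbf{1},\dots,b(\lambda_2)$ and multiplication $b(i)b(j)=\sum_{h=\max\{i,j\}}^{i+j}\binom{h}{i}\binom{h}{j}\binom{m+i+j}{i+j-h}b(h)$, $b(a)=0$ for $a>\lambda_2$. For $m=\sum_u m_u3^u$ in base 3, $m_{<u}=\sum_{s<u}m_s3^s$, and \[\psi_{m,u}=\sum_{k=1}^{3^u-1}\binom{m_{<u}}{3^u-k}b(k)\in S_\mathbf{F}(\lambda).\] *)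

From HB Require Import structures.
From mathcomp Require Import all_boot all_order all_algebra.
Set Implicit Arguments. Unset Strict Implicit. Unset Printing Implicit Defensive.
Import GRing.Theory.
Local Open Scope ring_scope.

(* The algebra S_F(lambda) for lambda = (l1, l2), m = l1 - l2, modelled on
   its basis b(0), ..., b(l2): an element is its coordinate row vector. *)
Definition SF (F : fieldType) (l2 : nat) := 'rV[F]_(l2.+1).

(* basis vector b(a); b(a) = 0 for a > l2 *)
Definition bb (F : fieldType) (l2 a : nat) : SF F l2 :=
  \row_(j < l2.+1) (if (j == a :> nat) then 1 else 0).

Definition bprod (F : fieldType) (m l2 i j : nat) : SF F l2 :=
  \sum_(maxn i j <= h < (i + j).+1)
     ('C(h, i) * 'C(h, j) * 'C(m + i + j, i + j - h))%N%:R *: @bb F l2 h.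

Definition smul (F : fieldType) (m l2 : nat) (x y : SF F l2) : SF F l2 :=
  \sum_(i < l2.+1) \sum_(j < l2.+1) (x 0 i * y 0 j) *: @bprod F m l2 i j.

Definition psi (F : fieldType) (l2 m u : nat) : SF F l2 :=
  \sum_(1 <= k < 3 ^ u) 'C(m %% 3 ^ u, 3 ^ u - k)%:R *: @bb F l2 k.

Definition digit3 (m u : nat) : nat := (m %/ 3 ^ u) %% 3.

From HB Require Import structures.
From mathcomp Require Import all_boot all_order all_algebra.
From mathcomp Require Import zify.
Import GRing.Theory.
Local Open Scope ring_scope.
Set Implicit Arguments. Unset Strict Implicit.

(* We argue coordinatewise.  The coefficient of b(h) in b(a) b(j) is the structure
   constant [bcoef m a j h], so the h-th coordinate of b(a) y is the linear form
   y |-> sum_j y_j bcoef m a j h; each identity of the theorem therefore becomes,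
   for every h, an identity between structure constants (the [_coord] lemmas).
   The tool is Lucas' theorem for blocks of size q = p^u in characteristic p
   ([lucas]), obtained from (X+1)^(aq+r) = (X^q+1)^a (X+1)^r.  Writing h = e q + r
   with r < q, it reduces the structure constants between multiples of q to level 0
   ([bcoef_aligned], r = 0) or to level 0 times C(m mod q, q - r)
   ([bcoef_shifted], 0 < r < q), and shows that b(c q) psi only contributes
   C(m mod q, q - r) to b(c q + r) ([psi_block]).  The remaining level-0 identities
   involve e <= 4 only; they are checked case by case in characteristic 3, where
   n = m div 3^u may be replaced by its last base-3 digit m_u. *)

Lemma coef_X1n (R : nzRingType) n k : (('X + 1 : {poly R}) ^+ n)`_k = 'C(n, k)%:R.
Proof.
rewrite exprD1n coef_sum.
rewrite (eq_bigr (fun i : 'I_n.+1 => if i == k :> nat then 'C(n, i)%:R else 0)).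
  rewrite -big_mkcond (big_ord1_eq _ (fun i => 'C(n, i)%:R)).
  by case: ltnP => // hk; rewrite bin_small.
by move=> i _; rewrite coefMn coefXn eq_sym; case: eqP; rewrite ?mul0rn.
Qed.

Lemma X1_pow_pchar (F : fieldType) p (hp : p \in [pchar F]) u :
  ('X + 1 : {poly F}) ^+ (p ^ u) = 'X^(p ^ u) + 1.
Proof.
have hpX : p \in [pchar {poly F}] by rewrite pchar_poly.
elim: u => [|u IH]; first by rewrite expn0 !expr1.
by rewrite expnSr !exprM IH exprDn_pchar ?expr1n // pnatE ?(pcharf_prime hp).
Qed.

Lemma coef_block (R : nzRingType) q i b r s : (r < q)%N -> (s < q)%N ->
  ('X^(i * q) * ('X + 1 : {poly R}) ^+ r)`_(b * q + s) = ((i == b) * 'C(r, s))%:R.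
Proof.
move=> hr hs; rewrite coefXnM coef_X1n.
case: (ltngtP i b) => hib.
- rewrite mul0n ifF; last by nia.
  by rewrite bin_small //; nia.
- by rewrite mul0n ifT //; nia.
- by rewrite hib ltnNge leq_addr addKn mul1n.
Qed.

Lemma lucas (F : fieldType) p (hp : p \in [pchar F]) u a b r s :
  (r < p ^ u)%N -> (s < p ^ u)%N ->
  'C(a * p ^ u + r, b * p ^ u + s)%:R = ('C(a, b) * 'C(r, s))%:R :> F.
Proof.
move=> hr hs; rewrite -(coef_X1n F) exprD (mulnC a) exprM X1_pow_pchar //.
rewrite exprD1n mulr_suml coef_sum.
under eq_bigr => i _ do rewrite mulrnAl -exprM mulnC coefMn coef_block //.
rewrite (eq_bigr (fun i : 'I_a.+1 => if i == b :> nat then ('C(a, i) * 'C(r, s))%:R else 0)).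
  rewrite -big_mkcond (big_ord1_eq _ (fun i => ('C(a, i) * 'C(r, s))%:R)).
  by case: ltnP => // hb; rewrite bin_small.
move=> i _; case: (i == b :> nat).
  by rewrite mul1n natrM mulrC mulr_natr.
by rewrite mul0n mul0rn.
Qed.

Definition bcoef (F : fieldType) (m a j h : nat) : F :=
  if (maxn a j <= h <= a + j)%N
  then ('C(h, a) * 'C(h, j) * 'C(m + a + j, a + j - h))%:R else 0.

Definition psi_coef (F : fieldType) (p m u a h : nat) : F :=
  \sum_(1 <= k < p ^ u) 'C(m %% p ^ u, p ^ u - k)%:R * bcoef F m a k h.

Section Coordinates.
Variables (F : fieldType) (l2 : nat).

Lemma bb_coord a (h : 'I_l2.+1) : bb F l2 a 0 h = (h == a :> nat)%:R.
Proof. by rewrite mxE; case: eqP. Qed.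

Lemma bprod_coord m a j (h : 'I_l2.+1) : bprod F m l2 a j 0 h = bcoef F m a j h.
Proof.
rewrite /bprod summxE.
under eq_bigr => k _ do rewrite mxE bb_coord eq_sym mulr_natr mulrb.
by rewrite -big_mkcond big_nat1_eq /bcoef ltnS.
Qed.

Definition lform (g : nat -> F) (y : SF F l2) : F := \sum_(j < l2.+1) y 0 j * g j.

Lemma lformD g (y z : SF F l2) : lform g (y + z) = lform g y + lform g z.
Proof. by rewrite /lform -big_split; apply: eq_bigr => j _; rewrite mxE mulrDl. Qed.

Lemma lformN g (y : SF F l2) : lform g (- y) = - lform g y.
Proof. by rewrite /lform -sumrN; apply: eq_bigr => j _; rewrite mxE mulNr. Qed.

Lemma lformZ g c (y : SF F l2) : lform g (c *: y) = c * lform g y.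
Proof. by rewrite /lform mulr_sumr; apply: eq_bigr => j _; rewrite mxE mulrA. Qed.

Lemma lform_sum g I (r : seq I) (P : pred I) (f : I -> SF F l2) :
  lform g (\sum_(i <- r | P i) f i) = \sum_(i <- r | P i) lform g (f i).
Proof.
rewrite /lform exchange_big /=; apply: eq_bigr => j _.
by rewrite summxE mulr_suml.
Qed.

Lemma lform_bb g a : (a <= l2)%N -> lform g (bb F l2 a) = g a.
Proof.
move=> ha; rewrite /lform.
under eq_bigr => j _ do rewrite bb_coord mulr_natl mulrb.
by rewrite -big_mkcond (big_ord1_eq _ g) ltnS ha.
Qed.

Lemma lform_psi m u a h : (3 ^ u <= l2)%N ->
  lform (fun j => bcoef F m a j h) (psi F l2 m u) = psi_coef F 3 m u a h.
Proof.
move=> hq; rewrite lform_sum /psi_coef big_nat_cond [RHS]big_nat_cond.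
apply: eq_bigr => k /andP[/andP[_ hk] _].
by rewrite lformZ lform_bb // ltnW // (leq_trans hk hq).
Qed.

Lemma smul_bb_coord m a (y : SF F l2) (h : 'I_l2.+1) : (a <= l2)%N ->
  smul m (bb F l2 a) y 0 h = lform (fun j => bcoef F m a j h) y.
Proof.
move=> ha; set G := fun i => lform (fun j => bcoef F m i j h) y.
rewrite /smul summxE (eq_bigr (fun i : 'I_l2.+1 => if i == a :> nat then G i else 0)).
  by rewrite -big_mkcond (big_ord1_eq _ G) ltnS ha.
move=> i _; rewrite summxE /G /lform.
under eq_bigr => j _ do rewrite mxE bb_coord bprod_coord -mulrA mulr_natl mulrb.
by case: (i == a :> nat); rewrite ?big1_eq.
Qed.

End Coordinates.

Lemma bcoef_zero_right (F : fieldType) m a h : bcoef F m a 0 h = (h == a)%:R.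
Proof.
rewrite /bcoef maxn0 addn0 -eqn_leq eq_sym.
by case: eqP => [->|]; rewrite ?subnn ?binn ?bin0.
Qed.

Section LucasBlocks.
Variables (F : fieldType) (p : nat).
Hypothesis hp : p \in [pchar F].
Variable u : nat.
Local Notation q := (p ^ u)%N.

Lemma q_gt0 : (0 < q)%N.
Proof. by rewrite expn_gt0 prime_gt0 // (pcharf_prime hp). Qed.

Lemma block_div e r : (r < q)%N -> ((e * q + r) %/ q = e)%N.
Proof. by move=> hr; rewrite divnMDl ?q_gt0 // divn_small ?addn0. Qed.

Lemma block_eq e c r s : (r < q)%N -> (s < q)%N ->
  (e * q + r == c * q + s)%N = (e == c) && (r == s).
Proof.
move=> hr hs; apply/eqP/andP => [H|[/eqP-> /eqP->]] //.
have ec : e = c by move/(congr1 (divn^~ q)): H; rewrite /= !block_div.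
by move: H; rewrite ec => /addnI->.
Qed.

Lemma block_eq0 e c r : (r < q)%N -> (e * q + r == c * q)%N = (e == c) && (r == 0%N).
Proof. by move=> hr; rewrite -[(c * q)%N]addn0 block_eq ?q_gt0. Qed.

Lemma leq_block M e r : (r < q)%N -> (M * q <= e * q + r)%N = (M <= e)%N.
Proof. by move=> hr; rewrite -leq_divRL ?q_gt0 // block_div. Qed.

Lemma block_leq e r S : (0 < r < q)%N -> (e * q + r <= S * q)%N = (e < S)%N.
Proof.
case/andP=> r0 hr; rewrite -(prednK r0) addnS -ltn_divLR ?q_gt0 // block_div //.
exact: leq_ltn_trans (leq_pred r) hr.
Qed.

Lemma lucas0 a b : 'C(a * q, b * q)%:R = 'C(a, b)%:R :> F.
Proof. by rewrite -[(a * q)%N]addn0 -[(b * q)%N]addn0 (lucas hp) ?q_gt0 // bin0 muln1. Qed.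

Lemma bcoef_aligned m c d e :
  bcoef F m (c * q) (d * q) (e * q) = bcoef F (m %/ q) c d e.
Proof.
rewrite /bcoef -maxnMl -mulnDl !leq_pmul2r ?q_gt0 //.
case: ifP => // /andP[_ hle]; rewrite !natrM !lucas0.
have -> : (m + c * q + d * q = (m %/ q + c + d) * q + m %% q)%N.
  by rewrite {1}(divn_eq m q); nia.
have -> : ((c + d) * q - e * q = (c + d - e) * q + 0)%N by rewrite addn0 mulnBl.
by rewrite (lucas hp) ?ltn_pmod ?q_gt0 // bin0 muln1.
Qed.

Lemma bcoef_shifted m c d e r : (0 < r < q)%N ->
  bcoef F m (c * q) (d * q) (e * q + r) =
  (if (maxn c d <= e < c + d)%N
   then ('C(e, c) * 'C(e, d) * 'C(m %/ q + c + d, c + d - e.+1))%:R else 0)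
  * 'C(m %% q, q - r)%:R.
Proof.
move=> hr; have /andP[r0 rq] := hr.
rewrite /bcoef -maxnMl -mulnDl leq_block // block_leq //.
case: ifP => [/andP[_ hlt]|_]; last by rewrite mul0r.
rewrite !natrM -[(c * q)%N]addn0 -[(d * q)%N]addn0 !(lucas hp) ?q_gt0 // !bin0 !muln1.
have -> : (m + (c * q + 0) + (d * q + 0) = (m %/ q + c + d) * q + m %% q)%N.
  by rewrite {1}(divn_eq m q); nia.
have -> : ((c + d) * q - (e * q + r) = (c + d - e.+1) * q + (q - r))%N.
  by rewrite mulnBl mulSn; nia.
by rewrite (lucas hp) ?ltn_pmod ?q_gt0 ?natrM ?mulrA // ltn_subrL r0 q_gt0.
Qed.

Lemma bcoef_small m c k h : (0 < c)%N -> (0 < k < q)%N ->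
  bcoef F m (c * q) k h = (h == c * q + k)%N%:R.
Proof.
move=> c0 /andP[k0 kq].
have kcq : (k <= c * q)%N by rewrite (leq_trans (ltnW kq)) // leq_pmull.
rewrite /bcoef (maxn_idPl kcq).
case: ifP => [/andP[hcq]|hout]; last first.
  by case: eqP hout => // ->; rewrite leq_addr leqnn.
rewrite -(subnKC hcq) leq_add2l eqn_add2l; set r := (h - c * q)%N => hrk.
have hr : (r < q)%N := leq_ltn_trans hrk kq.
rewrite subnDl !natrM -{2}[(c * q)%N]addn0 (lucas hp) ?q_gt0 // binn bin0 muln1 mul1r.
have -> : 'C(c * q + r, k) = 'C(c * q + r, 0 * q + k) by rewrite mul0n.
rewrite (lucas hp) // bin0 mul1n.
case: (ltngtP r k) hrk => // [hlt|->] _; first by rewrite bin_small // mul0r.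
by rewrite subnn binn bin0 mulr1.
Qed.

Lemma psi_block m c e r : (0 < c)%N -> (r < q)%N ->
  psi_coef F p m u (c * q) (e * q + r) =
  ((e == c) && (0 < r)%N)%:R * 'C(m %% q, q - r)%:R.
Proof.
move=> c0 hr; rewrite /psi_coef big_nat_cond.
rewrite (eq_bigr (fun k => if (e == c) && (k == r) then 'C(m %% q, q - k)%:R else 0)).
  case: eqP => _ /=; last by rewrite big1 ?mul0r.
  by rewrite -big_nat_cond -big_mkcond big_nat1_eq hr andbT mulr_natl mulrb.
move=> k /andP[/andP[k1 kq] _]; rewrite bcoef_small ?k1 // block_eq // [r == k]eq_sym.
by rewrite mulr_natr mulrb.
Qed.

End LucasBlocks.

Section CharThree.
Variable F : fieldType.
Hypothesis hF : 3%N \in [pchar F].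
Variables m u : nat.
Local Notation q := (3 ^ u)%N.
Local Notation n := (m %/ 3 ^ u)%N.
Local Notation d := (digit3 m u).

Lemma natr_add3 x : ((x + 3)%:R : F) = x%:R.
Proof. by rewrite natrD (GRing.pcharf0 hF) addr0. Qed.

Lemma natr_two : (2%:R : F) = -1.
Proof. by apply/eqP; rewrite -addr_eq0 natr1 (GRing.pcharf0 hF). Qed.

Lemma natr_digit k : ((d + k)%:R : F) = (n + k)%:R.
Proof. by rewrite /digit3 -(GRing.natr_mod_pchar hF (_ + k)) modnDml GRing.natr_mod_pchar. Qed.

(* By Lucas' theorem with q = 3, C(n + 4, 2) only depends on n mod 3. *)
Lemma bin2_digit : ('C(n + 4, 2)%:R : F) = 'C(d + 1, 2)%:R.
Proof.
have -> : 'C(n + 4, 2) = 'C((n + 4) %/ 3 ^ 1 * 3 ^ 1 + (n + 4) %% 3 ^ 1, 0 * 3 ^ 1 + 2).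
  by rewrite -divn_eq.
rewrite (lucas hF) ?ltn_pmod // bin0 mul1n expn1 -modnDml /digit3.
have : (n %% 3 < 3)%N by rewrite ltn_mod.
case: (n %% 3)%N => [|[|[|k]]] //= _.
by rewrite -['C(2 + 1, 2)]/3%N (GRing.pcharf0 hF).
Qed.

Lemma square1_coord h :
  bcoef F m q q h = 'C(d + 2, 1)%:R * (h == q)%:R
    + psi_coef F 3 m u q h + (h == 2 * q)%N%:R.
Proof.
rewrite -{1 2 3 4}[q]mul1n (divn_eq h q).
have hr : (h %% q < q)%N by rewrite ltn_pmod ?(q_gt0 hF).
set e := (h %/ q)%N; set r := (h %% q)%N.
rewrite (psi_block hF) // !(block_eq0 hF) //.
case: (posnP r) => [-> | rpos].
- rewrite addn0 (bcoef_aligned hF) andbT andbF mul0r addr0.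
  case: e => [|[|[|e]]]; rewrite /bcoef /= ?(mulr0, mulr1, addr0, add0r) //.
  + by rewrite binn !bin1 natr_digit !mul1n -addnA.
  + by rewrite bin1 bin0 -(GRing.natr_mod_pchar hF).
- rewrite (bcoef_shifted hF); last by rewrite rpos.
  rewrite !andbF !andbT mulr0 add0r addr0.
  case: e => [|[|e]]; rewrite /= ?(mulr0, mulr1, addr0, add0r, mul0r) //.
  by rewrite binn bin0.
Qed.

Lemma square2_coord h :
  bcoef F m (2 * q) (2 * q) h = 'C(d + 1, 2)%:R * (h == 2 * q)%N%:R
    + 'C(d + 1, 1)%:R * psi_coef F 3 m u (2 * q) h.
Proof.
rewrite (divn_eq h q).
have hr : (h %% q < q)%N by rewrite ltn_pmod ?(q_gt0 hF).
set e := (h %/ q)%N; set r := (h %% q)%N.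
rewrite (psi_block hF) // !(block_eq0 hF) //.
case: (posnP r) => [-> | rpos].
- rewrite addn0 (bcoef_aligned hF) andbT andbF mul0r mulr0 addr0.
  case: e => [|[|[|[|[|e]]]]]; rewrite /bcoef /= ?(mulr0, mulr1, addr0, add0r) //.
  + by rewrite binn !mul1n addnK -addnA bin2_digit.
  + by rewrite -['C(3, 2)]/3%N !natrM (GRing.pcharf0 hF) !mul0r.
  + by rewrite bin0 -(GRing.natr_mod_pchar hF).
- rewrite (bcoef_shifted hF); last by rewrite rpos.
  rewrite !andbF !andbT mulr0 add0r.
  case: e => [|[|[|[|e]]]]; rewrite /= ?(mulr0, mulr1, addr0, add0r, mul0r, mul1r) //.
  + by rewrite binn !bin1 natr_digit !mul1n -!addnA -[(2 + 2)%N]/(1 + 3)%N addnA natr_add3.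
  + by rewrite -['C(3, 2)]/3%N !natrM (GRing.pcharf0 hF) !mul0r.
Qed.

Lemma product_coord h :
  bcoef F m q (2 * q) h = (2 * 'C(d, 1))%N%:R * (h == 2 * q)%N%:R
    - psi_coef F 3 m u (2 * q) h.
Proof.
rewrite -{1}[q]mul1n (divn_eq h q).
have hr : (h %% q < q)%N by rewrite ltn_pmod ?(q_gt0 hF).
set e := (h %/ q)%N; set r := (h %% q)%N.
rewrite (psi_block hF) // !(block_eq0 hF) //.
case: (posnP r) => [-> | rpos].
- rewrite addn0 (bcoef_aligned hF) andbT andbF mul0r subr0.
  case: e => [|[|[|[|e]]]]; rewrite /bcoef /= ?(mulr0, mulr1, addr0, add0r) //.
  + by rewrite binn !bin1 muln1 !natrM -addnA -(natr_add3 d) natr_digit.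
  + by rewrite -['C(3, 2)]/3%N bin1 !natrM (GRing.pcharf0 hF) !mul0r.
- rewrite (bcoef_shifted hF); last by rewrite rpos.
  rewrite !andbF !andbT mulr0 add0r.
  case: e => [|[|[|e]]]; rewrite /= ?(mulr0, mulr1, addr0, add0r, mul0r, mul1r, oppr0) //.
  by rewrite bin1 binn bin0 !muln1 natr_two mulN1r.
Qed.

End CharThree.

Theorem mainTheorem5 (F : fieldType) (hF : 3%N \in [pchar F])
  (l1 l2 : nat) (hl : (l2 <= l1)%N) (u : nat) (hu : (2 * 3 ^ u <= l2)%N) :
  let m := (l1 - l2)%N in
  let b := @bb F l2 in
  let mul := @smul F m l2 in
  let one := b 0%N in
  let ps := @psi F l2 m u in
  let mu := digit3 m u in
  [/\ mul (b (3 ^ u)%N) (b (3 ^ u)%N)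
        = mul (b (3 ^ u)%N) ('C(mu + 2, 1)%:R *: one + ps) + b (2 * 3 ^ u)%N,
      mul (b (2 * 3 ^ u)%N) (b (2 * 3 ^ u)%N)
        = mul (b (2 * 3 ^ u)%N) ('C(mu + 1, 2)%:R *: one + 'C(mu + 1, 1)%:R *: ps)
    & mul (b (3 ^ u)%N) (b (2 * 3 ^ u)%N)
        = mul (b (2 * 3 ^ u)%N) ((2 * 'C(mu, 1))%N%:R *: one - ps)].
Proof.
move=> m b mul one ps mu.
have hq : (3 ^ u <= l2)%N by apply: leq_trans hu; rewrite leq_pmull.
split; apply/rowP => h; rewrite /mul /one /b /ps.
- rewrite [RHS]mxE !smul_bb_coord // lformD lformZ !lform_bb // lform_psi //.
  by rewrite bb_coord bcoef_zero_right square1_coord.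
- rewrite !smul_bb_coord // lformD !lformZ !lform_bb // lform_psi //.
  by rewrite bcoef_zero_right square2_coord.
- rewrite !smul_bb_coord // lformD lformN lformZ !lform_bb // lform_psi //.
  by rewrite bcoef_zero_right product_coord.
Qed.
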